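(* Let $\Gamma=\langle V,(w_u)_{u\in V},\alpha,\beta\rangle$ be a celebrity game with $\beta>1$, $n=|V|$ and $W=\sum_{u\in V}w_u$. Then $\mathrm{opt}(\Gamma)=\min\{\alpha,W\}\,(n-1)$.
   Context: A celebrity game $\Gamma=\langle V,(w_u)_{u\in V},\alpha,\beta\rangle$ consists of a set of players $V=\{1,\dots,n\}$, celebrity weights $w_u>0$, a link cost $\alpha>0$ and a critical distance $\beta$ with $1\le\beta\le n-1$. A strategy of player $u$ is a set $S_u\subseteq V\setminus\{u\}$; a strategy profile is $S=(S_1,\dots,S_n)$; its outcome graph $G[S]$ is the undirected graph on $V$ with edge set $\{\{u,v\}: u\in S_v\text{ or }v\in S_u\}$. With $d_G$ the graph distance (infinite between different connected components), the cost of player $u$ is $c_u(S)=\alpha|S_u|+\sum_{v:\,d_{G[S]}(u,v)>\beta}w_v$, the social cost is $C(S)=\sum_{u\in V}c_u(S)$, and $\mathrm{opt}(\Gamma)=\min_S C(S)$ over all strategy profiles. *)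

From mathcomp Require Import all_boot all_order all_algebra.
Set Implicit Arguments. Unset Strict Implicit. Unset Printing Implicit Defensive.
Import Order.TTheory GRing.Theory Num.Theory.
Local Open Scope ring_scope.

Definition valid_profile (n : nat) (S : 'I_n -> {set 'I_n}) : Prop :=
  forall u : 'I_n, u \notin S u.

Definition adj (n : nat) (S : 'I_n -> {set 'I_n}) (u v : 'I_n) : bool :=
  (u \in S v) || (v \in S u).

Fixpoint ball (n : nat) (S : 'I_n -> {set 'I_n}) (k : nat) (u : 'I_n)
  : {set 'I_n} :=
  match k with
  | 0 => [set u]
  | k'.+1 => ball S k' u :|: [set v | [exists x in ball S k' u, adj S x v]]
  end.

(* d_{G[S]}(u,v) > beta  iff  v is not in the beta-ball of u. *)
Definition far (n : nat) (S : 'I_n -> {set 'I_n}) (beta : nat) (u v : 'I_n)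
  : bool := v \notin ball S beta u.

Definition player_cost (R : realFieldType) (n : nat) (w : 'I_n -> R)
  (alpha : R) (beta : nat) (S : 'I_n -> {set 'I_n}) (u : 'I_n) : R :=
  alpha * (#|S u|)%:R + \sum_(v | far S beta u v) w v.

Definition social_cost (R : realFieldType) (n : nat) (w : 'I_n -> R)
  (alpha : R) (beta : nat) (S : 'I_n -> {set 'I_n}) : R :=
  \sum_(u : 'I_n) player_cost w alpha beta S u.

Definition is_opt (R : realFieldType) (n : nat) (w : 'I_n -> R)
  (alpha : R) (beta : nat) (x : R) : Prop :=
  (exists S, valid_profile S /\ social_cost w alpha beta S = x) /\
  (forall S, valid_profile S -> x <= social_cost w alpha beta S).

(** Lower bound: in a BFS forest of G[S] every vertex other than the roots is
    joined to its parent by a link that somebody bought, and distinct vertices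
    give distinct links; so a profile whose outcome graph has [k] components
    buys at least [n - k] links.  A root pays the weight of everything outside
    its own component, so the [k] roots alone pay at least [k W - W].
    Hence every profile costs at least [min alpha W * (n - 1)].  This bound is
    attained by the empty profile (cost [W (n - 1)]) and, as [beta >= 2], by the
    star in which every leaf buys the link to the centre (cost [alpha (n - 1)]). *)

From mathcomp Require Import all_boot all_order all_algebra zify.
Import Order.TTheory GRing.Theory Num.Theory.
Set Implicit Arguments. Unset Strict Implicit. Unset Printing Implicit Defensive.

Section OutcomeGraph.

Variables (n : nat) (S : 'I_n -> {set 'I_n}).

Local Notation connect_adj := (connect (adj S)).
Local Notation root := (fingraph.root (adj S)).

Lemma adj_sym : symmetric (adj S).
Proof. by move=> x y; rewrite /adj orbC. Qed.

Lemma connect_sym_adj : connect_sym (adj S).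
Proof. exact/sym_connect_sym/adj_sym. Qed.

Lemma mem_ball_adj k u x y :
  x \in ball S k u -> adj S x y -> y \in ball S k.+1 u.
Proof.
by move=> hx hxy; rewrite /= !inE; apply/orP; right; apply/existsP; exists x; rewrite hx.
Qed.

Lemma ball_connect k u v : v \in ball S k u -> connect_adj u v.
Proof.
elim: k v => [|k IH] v /=; first by rewrite inE => /eqP ->.
rewrite inE => /orP[/IH //|]; rewrite inE => /existsP[x /andP[/IH hx hxv]].
exact: connect_trans hx (connect1 hxv).
Qed.

Lemma ball_sub k m u : (k <= m)%N -> ball S k u \subset ball S m u.
Proof.
move=> /subnK <-; elim: (m - k)%N => [|j IH] //=.
exact: subset_trans IH (subsetUl _ _).
Qed.

Lemma path_last_ball u p x k :
  path (adj S) x p -> x \in ball S k u -> last x p \in ball S (k + size p) u.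
Proof.
elim: p x k => [|y p IH] x k /=; first by rewrite addn0.
by move=> /andP[hxy hp] hx; rewrite -addSnnS; apply: IH => //; apply: mem_ball_adj hxy.
Qed.

Lemma connect_ball u v : connect_adj u v -> exists k, v \in ball S k u.
Proof.
move=> /connectP[p hp ->]; exists (0 + size p)%N.
by apply: path_last_ball; rewrite ?inE.
Qed.

Lemma exists_ball_root u : exists k, u \in ball S k (root u).
Proof. by apply: connect_ball; rewrite connect_sym_adj connect_root. Qed.

Definition depth u : nat := ex_minn (exists_ball_root u).

Lemma ball_depth u : u \in ball S (depth u) (root u).
Proof. by rewrite /depth; case: ex_minnP. Qed.

Lemma depth_min u k : u \in ball S k (root u) -> (depth u <= k)%N.
Proof. by rewrite /depth; case: ex_minnP => m _ hmin /hmin. Qed.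

Lemma exists_parent u :
  ~~ roots (adj S) u -> exists x, adj S x u && (depth x < depth u)%N.
Proof.
move=> hu; have := ball_depth u; have := @depth_min u.
case: (depth u) => [|k] /= hmin.
  by rewrite inE => /eqP hroot; move: hu; rewrite /roots -hroot eqxx.
rewrite inE => /orP[/hmin|]; first by rewrite ltnn.
rewrite inE => /existsP[x /andP[hx hxu]]; exists x; rewrite hxu ltnS.
apply: depth_min; suff <- : root u = root x by [].
apply/eqP; rewrite (root_connect connect_sym_adj).
exact: connect_trans (connect_root _ u) (ball_connect hx).
Qed.

Definition component_roots : {set 'I_n} := [set u | roots (adj S) u].

Definition links : {set 'I_n * 'I_n} := [set p | p.2 \in S p.1].

Lemma card_links : #|links| = (\sum_u #|S u|)%N.
Proof.
rewrite -sum1_card big_mkcond /=.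
transitivity (\sum_u \sum_v (v \in S u : nat))%N.
  by rewrite pair_big; apply: eq_bigr => p _; rewrite inE; case: (_ \in _).
apply: eq_big => // u _; rewrite -sum1_card [RHS]big_mkcond.
by apply: eq_big => // v _; case: (_ \in _).
Qed.

(** Oriented as (buyer, seller); [(u, u)] is a junk value, reached only at roots. *)
Definition parent_link u : 'I_n * 'I_n :=
  if [pick x | adj S x u && (depth x < depth u)%N] is Some x then
    if x \in S u then (u, x) else (x, u)
  else (u, u).

Definition deeper_end (p : 'I_n * 'I_n) : 'I_n :=
  if (depth p.2 < depth p.1)%N then p.1 else p.2.

Lemma parent_linkP u : ~~ roots (adj S) u ->
  parent_link u \in links /\ deeper_end (parent_link u) = u.
Proof.
move=> hu; rewrite /parent_link; case: pickP => [x /andP[hxu hlt]|]; last first.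
  by case: (exists_parent hu) => x hx /(_ x); rewrite hx.
rewrite /deeper_end !inE; case: ifP => /= hx; first by rewrite hx hlt.
by move: hxu; rewrite /adj hx ltnNge (ltnW hlt).
Qed.

Lemma card_nonroots_le_links : (#|~: component_roots| <= \sum_u #|S u|)%N.
Proof.
rewrite -card_links -(@card_in_imset _ _ parent_link); last first.
  move=> u v; rewrite !inE => hu hv huv.
  by rewrite -(parent_linkP hu).2 -(parent_linkP hv).2 huv.
apply/subset_leq_card/subsetP => _ /imsetP[u hu ->].
by rewrite !inE in hu; case: (parent_linkP hu).
Qed.

End OutcomeGraph.

Lemma ball_empty n k (u : 'I_n) : ball (fun _ => set0) k u = [set u].
Proof.
elim: k => [|k IH] //=; rewrite IH; apply/setP => v; rewrite !inE.
case: eqP => //= _; apply/negbTE/existsP => -[x]; by rewrite /adj !inE andbF.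
Qed.

Definition star n (c : 'I_n) (u : 'I_n) : {set 'I_n} :=
  if u == c then set0 else [set c].

Lemma star_valid n (c : 'I_n) : valid_profile (star c).
Proof. by move=> u; rewrite /star; case: eqP => [_|/eqP]; rewrite ?inE // eq_sym. Qed.

Lemma adj_star n (c x : 'I_n) : x != c -> adj (star c) x c.
Proof. by move=> hx; rewrite /adj /star (negbTE hx) !inE eqxx orbT. Qed.

Lemma ball_star n (c u v : 'I_n) : v \in ball (star c) 2 u.
Proof.
have c_in : c \in ball (star c) 1 u.
  have [->|huc] := eqVneq u c; first by rewrite /= !inE eqxx.
  by apply: (mem_ball_adj (x := u)); rewrite ?inE ?adj_star.
have [->|hvc] := eqVneq v c; first by rewrite /= inE c_in.
by apply: mem_ball_adj c_in _; rewrite adj_sym adj_star.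
Qed.

Local Open Scope ring_scope.

Lemma ler_sum_subpred (R : numDomainType) (T : finType) (P Q : pred T) (F : T -> R) :
  (forall i, P i -> Q i) -> (forall i, 0 <= F i) ->
  \sum_(i | P i) F i <= \sum_(i | Q i) F i.
Proof.
move=> PQ F0; rewrite [leLHS]big_mkcond [leRHS]big_mkcond.
apply: ler_sum => i _; case: ifP => [/PQ -> //|_]; by case: ifP.
Qed.

Lemma sum_over_components (R : nmodType) (T : finType) (e : rel T) (F : T -> R) :
  connect_sym e ->
  \sum_(r | roots e r) \sum_(v | connect e r v) F v = \sum_v F v.
Proof.
move=> sym_e; rewrite [RHS](partition_big (fingraph.root e) (roots e)) /=; last first.
  by move=> v _; apply: roots_root.
apply: eq_bigr => r /eqP root_r; apply: eq_bigl => v.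
by rewrite -{2}root_r (root_connect sym_e) sym_e.
Qed.

Section Costs.

Variables (R : realFieldType) (n : nat) (w : 'I_n -> R) (alpha : R) (beta : nat).

Local Notation W := (\sum_u w u).
Local Notation distance_cost S := (\sum_u \sum_(v | far S beta u v) w v).

Lemma social_costE S :
  social_cost w alpha beta S = alpha * (\sum_u #|S u|)%:R + distance_cost S.
Proof. by rewrite /social_cost /player_cost big_split /= -mulr_sumr -natr_sum. Qed.

Lemma distance_cost_ge S :
  (forall u, 0 <= w u) -> W *+ #|component_roots S| - W <= distance_cost S.
Proof.
move=> w_ge0.
have sum_disconnected u :
    \sum_(v | ~~ connect (adj S) u v) w v = W - \sum_(v | connect (adj S) u v) w v.
  by rewrite [in RHS](bigID (connect (adj S) u)) /= addrAC subrr add0r.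
apply: (@le_trans _ _ (\sum_(u in component_roots S)
                          \sum_(v | ~~ connect (adj S) u v) w v)).
  rewrite (eq_bigr _ (fun u _ => sum_disconnected u)).
  rewrite sumrB sumr_const; apply: lerB => //.
  rewrite (eq_bigl (roots (adj S))) => [|u]; last by rewrite inE.
  by rewrite sum_over_components //; apply: connect_sym_adj.
apply: (@le_trans _ _ (\sum_u \sum_(v | ~~ connect (adj S) u v) w v)).
  by apply: ler_sum_subpred => // u; apply: sumr_ge0.
apply: ler_sum => u _; apply: ler_sum_subpred => // v; apply: contra.
exact: ball_connect.
Qed.

Lemma social_cost_ge (u0 : 'I_n) S :
  (forall u, 0 <= w u) -> 0 <= alpha ->
  Num.min alpha W * (n - 1)%:R <= social_cost w alpha beta S.
Proof.
move=> w_ge0 alpha_ge0; set m := Num.min alpha W; set k := #|component_roots S|.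
have k_gt0 : (0 < k)%N.
  apply/card_gt0P; exists (fingraph.root (adj S) u0).
  by rewrite inE roots_root //; apply: connect_sym_adj.
have n1E : (n - 1 = #|~: component_roots S| + k.-1)%N.
  by have := cardsC (component_roots S); rewrite card_ord -/k; lia.
have m_ge0 : 0 <= m by rewrite le_min alpha_ge0 sumr_ge0.
rewrite social_costE n1E natrD mulrDr; apply: lerD.
  apply: (@le_trans _ _ (alpha * #|~: component_roots S|%:R)).
    by apply: ler_wpM2r; rewrite ?ge_min ?lexx.
  by rewrite ler_wpM2l // ler_nat card_nonroots_le_links.
apply: le_trans (distance_cost_ge S w_ge0).
rewrite -/k -{2}(prednK k_gt0) mulrSr addrK -[W *+ _]mulr_natr.
by apply: ler_wpM2r; rewrite ?ge_min ?lexx ?orbT.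
Qed.

Lemma social_cost_empty (u0 : 'I_n) :
  social_cost w alpha beta (fun _ => set0) = W * (n - 1)%:R.
Proof.
rewrite social_costE big1 ?mulr0 ?add0r => [|u _]; last by rewrite cards0.
have far_empty u : \sum_(v | far (fun _ => set0) beta u v) w v = W - w u.
  rewrite [in RHS](bigD1 u) //= addrC addrK; apply: eq_bigl => v.
  by rewrite /far ball_empty inE.
rewrite (eq_bigr _ (fun u _ => far_empty u)) sumrB sumr_const card_ord.
have n_succ : n = (n - 1).+1 by have := ltn_ord u0; lia.
by rewrite [X in W *+ X]n_succ mulrSr addrK mulr_natr.
Qed.

Lemma social_cost_star (c : 'I_n) :
  (2 <= beta)%N -> social_cost w alpha beta (star c) = alpha * (n - 1)%:R.
Proof.
move=> beta_ge2; rewrite social_costE [X in _ + X]big1 ?addr0 => [|u _]; last first.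
  by rewrite big_pred0 // => v; rewrite /far (subsetP (ball_sub _ u beta_ge2)) ?ball_star.
rewrite (bigD1 c) //= /star eqxx cards0 add0n.
rewrite (eq_bigr (fun _ => 1%N)) => [|u /negbTE ->]; last by rewrite cards1.
by rewrite sum1_card cardC1 card_ord subn1.
Qed.

End Costs.

Unset Implicit Arguments.
Theorem proposition2 (R : realFieldType) (n : nat) (w : 'I_n -> R)
  (alpha : R) (beta : nat)
  (hw : forall u, 0 < w u) (halpha : 0 < alpha)
  (hbeta1 : (1 < beta)%N) (hbetan : (beta <= n - 1)%N) :
  is_opt w alpha beta (Num.min alpha (\sum_(u : 'I_n) w u) * (n - 1)%:R).
Proof.
have u0 : 'I_n by apply: (@Ordinal n 0); lia.
split; last by move=> S _; apply: (social_cost_ge beta u0) => [u|]; apply: ltW.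
have [alpha_le_W | W_lt_alpha] := leP alpha (\sum_u w u).
- exists (star u0); split; first exact: star_valid.
  by rewrite social_cost_star.
- exists (fun _ => set0); split; first by move=> u; rewrite inE.
  exact: social_cost_empty.
Qed.
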